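(* Let $I\subset F$ be a graded two-sided ideal and $J=L(I)\subset R$. For every $d\ge0$, $\iota(I_d)=J(d)_d$, where $J(d)=J\cap R(d)$. In particular $\dim_{\mathbb K}I_d=\dim_{\mathbb K}J(d)_d$.
   Context: Let $\mathbb K$ be a field and $F=\mathbb K\langle x_1,\dots,x_n\rangle$ the free associative algebra with standard grading; $I_d=I\cap F_d$. Let $P=\mathbb K[x_{ij}\mid 1\le i\le n,\ j\ge1]$ be the commutative polynomial ring with $\deg x_{ij}=1$, $Q\subset P$ the ideal generated by all $x_{ij}x_{kj}$ ($1\le i,k\le n$, $j\ge1$), and $R=P/Q$. Let $\sigma:R\to R$ be the algebra endomorphism $x_{ij}\mapsto x_{i,j+1}$. Let $\iota:F\to R$ be the $\mathbb K$-linear map sending each word $x_{i_1}\cdots x_{i_d}$ to $x_{i_1 1}x_{i_2 2}\cdots x_{i_d d}$. For $d\ge0$, $R(d)$ is the subalgebra of $R$ generated by the $x_{ij}$ with $j\le d$ (i.e. $P(d)/(Q\cap P(d))$ with $P(d)=\mathbb K[x_{ij}\mid j\le d]$). For a graded two-sided ideal $I\subset F$, its letterplace analogue $L(I)$ is the ideal of $R$ generated by $\bigcup_{k\ge0}\sigma^k(\iota(I))$. *)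

From HB Require Import structures.
From mathcomp Require Import all_boot all_order all_algebra.
Set Implicit Arguments. Unset Strict Implicit. Unset Printing Implicit Defensive.
Import GRing.Theory.
Local Open Scope ring_scope.

Section Letterplace.
Variables (K : fieldType) (n : nat).

(* A word x_{i_1}...x_{i_d} is a sequence of letters in 'I_n; an element
   of F is its coefficient function, required to have finite support.   *)
Definition word := seq 'I_n.
Definition fpoly := word -> K.

Definition is_F (f : fpoly) : Prop :=
  exists s : seq word, forall w, w \notin s -> f w = 0.

Definition fmul (f g : fpoly) : fpoly :=
  fun w => \sum_(k < (size w).+1) f (take k w) * g (drop k w).

Definition fhom (d : nat) (f : fpoly) : fpoly :=
  fun w => if size w == d then f w else 0.

Definition homogF (d : nat) (f : fpoly) : Prop :=
  forall w, f w != 0 -> size w = d.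

Definition graded_ideal (I : fpoly -> Prop) : Prop :=
  [/\ (forall f, I f -> is_F f),
      I (fun _ => 0),
      (forall f g, I f -> I g -> I (fun w => f w + g w)),
      (forall f g, is_F g -> I f -> I (fmul g f) /\ I (fmul f g))
    & (forall f d, I f -> I (fhom d f))].

(* The variable x_{i,j} (1 <= j) is encoded as the pair (i, j-1).
   A commutative monomial is a sequence of variables taken up to
   permutation; an element of P is its coefficient function, required to
   be a finite formal sum of monomials.                                 *)
Definition var := ('I_n * nat)%type.
Definition mono := seq var.
Definition ppoly := mono -> K.

Definition is_poly (p : ppoly) : Prop :=
  exists s : seq (K * mono),
    forall m, p m = \sum_(t <- s | perm_eq t.2 m) t.1.

Definition mono_poly (u : mono) : ppoly :=
  fun m => if perm_eq u m then 1 else 0.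

Definition mdivides (u m : mono) : bool :=
  all (fun v => (count_mem v u <= count_mem v m)%N) u.
Definition mdiff (m u : mono) : mono := foldr (fun v acc => rem v acc) m u.

Definition mulmono (u : mono) (p : ppoly) : ppoly :=
  fun m => if mdivides u m then p (mdiff m u) else 0.

Fixpoint all_in (T : Type) (P : T -> Prop) (l : seq T) : Prop :=
  match l with [::] => True | x :: l' => P x /\ all_in P l' end.

Definition genP (S : ppoly -> Prop) (p : ppoly) : Prop :=
  exists l : seq (K * mono * ppoly),
    all_in (fun t => S t.2) l /\
    forall m, p m = \sum_(t <- l) t.1.1 * mulmono t.1.2 t.2 m.

Definition Qgen (g : ppoly) : Prop :=
  exists (i k : 'I_n) (j : nat), g = mono_poly [:: (i, j); (k, j)].
Definition Qideal : ppoly -> Prop := genP Qgen.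

(* congruence modulo Q: p and q define the same element of R = P/Q *)
Definition eqQ (p q : ppoly) : Prop := Qideal (fun m => p m - q m).

(* the shift sigma : x_{ij} |-> x_{i,j+1} (lifted to P) *)
Definition sigma (p : ppoly) : ppoly :=
  fun m => if all (fun v : var => (0 < v.2)%N) m
           then p [seq (v.1, v.2.-1) | v <- m] else 0.

(* iota : x_{i_1}...x_{i_d} |-> x_{i_1 1} ... x_{i_d d} (lifted to P) *)
Definition iotaLP (f : fpoly) : ppoly :=
  fun m => \sum_(w : (size m).-tuple 'I_n
                 | perm_eq (zip (tval w) (iota 0 (size m))) m) f w.

(* preimage in P of L(I): the ideal generated by Q and all sigma^k(iota(I)) *)
Definition LIpre (I : fpoly -> Prop) : ppoly -> Prop :=
  genP (fun g => Qgen g \/ exists (k : nat) (f : fpoly),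
                              I f /\ g = iter k sigma (iotaLP f)).

(* P(d)_d : homogeneous of degree d, only variables x_{ij} with j <= d *)
Definition inPdd (d : nat) (p : ppoly) : Prop :=
  is_poly p /\
  forall m, p m != 0 -> size m = d /\ all (fun v : var => (v.2 < d)%N) m.

End Letterplace.

From HB Require Import structures.
From mathcomp Require Import all_boot all_order all_algebra zify.
From Stdlib Require Import Classical FunctionalExtensionality.
Set Implicit Arguments. Unset Strict Implicit. Unset Printing Implicit Defensive.
Import GRing.Theory.

(* Call a monomial column-distinct if its variables x_ij lie in pairwise
   distinct columns j.  Elements of Q vanish at column-distinct monomials, and
   a polynomial vanishing at all of them lies in Q.  The column-distinct
   monomials of degree d in the columns <= d are exactly the letterplace
   monomials x_{w_1 1} ... x_{w_d d} of the words w of length d, so modulo Q an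
   element of P(d)_d is determined by its coefficients at them, read as a
   function of w.  For a generator sigma^k(iota f) of L(I) multiplied by a
   monomial u, this coefficient is f applied to the middle factor
   w_{k+1} ... w_{k+e} of w when u is the letterplace monomial of the two outer
   factors, and 0 otherwise; as a function of w it is a sum of products a f b
   with words a, b, hence lies in I.  Summing over generators, the coefficient
   function of an element of J(d)_d is the degree-d part of some f in I, and
   iota(f) recovers f from its coefficients. *)

Notation lpmono w := (zip w (iota 0 (size w))).
Notation lpcoef u k f w := (mulmono u (iter k (@sigma _ _) (iotaLP f)) (lpmono w)).

Lemma all_in_cat (T : Type) (P : T -> Prop) (l1 l2 : seq T) :
  all_in P l1 -> all_in P l2 -> all_in P (l1 ++ l2).
Proof. by elim: l1 => //= a l IH [Pa Pl] Pl2; split => //; apply: IH. Qed.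

Lemma all_in_impl (T : Type) (P Q : T -> Prop) (l : seq T) :
  (forall x, P x -> Q x) -> all_in P l -> all_in Q l.
Proof. by move=> PQ; elim: l => //= a l IH [Pa Pl]; split; [apply: PQ | apply: IH]. Qed.

Lemma perm_countP (T : eqType) (s t : seq T) :
  reflect (forall x, count_mem x s = count_mem x t) (perm_eq s t).
Proof.
apply: (iffP idP) => [/permP eq_st x | eq_st]; first exact: eq_st.
by rewrite /perm_eq; apply/allP => x _ /=; rewrite eq_st.
Qed.

Section ZipIota.
Variable T : Type.
Implicit Types (w x : seq T).

Lemma size_zip_iota x s : size (zip x (iota s (size x))) = size x.
Proof. by rewrite size_zip size_iota minnn. Qed.

Lemma uniq_cols_zip_iota x s : uniq (map snd (zip x (iota s (size x)))).
Proof. by rewrite -/(unzip2 _) unzip2_zip ?size_iota ?iota_uniq. Qed.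

Lemma zip_iota_cat w s k : k <= size w ->
  zip w (iota s (size w)) =
  zip (take k w) (iota s k) ++ zip (drop k w) (iota (s + k) (size w - k)).
Proof.
move=> le_kw; rewrite -[in iota s (size w)](subnKC le_kw) iotaD.
by rewrite -{1}(cat_take_drop k w) zip_cat // size_takel // size_iota.
Qed.

Lemma zip_iota_cat3 w k e : k + e <= size w ->
  lpmono w =
  zip (take k w) (iota 0 k) ++ zip (take e (drop k w)) (iota k e) ++
  zip (drop (k + e) w) (iota (k + e) (size w - (k + e))).
Proof.
move=> le_kew; rewrite (zip_iota_cat 0 (k := k)); last by lia.
rewrite -(size_drop k w) (zip_iota_cat _ (k := e)); last by rewrite size_drop; lia.
by rewrite drop_drop size_drop add0n (addnC e k) subnDA.
Qed.

Lemma zip_iota_subn x k s e :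
  [seq (v.1, v.2 - k) | v <- zip x (iota (k + s) e)] = zip x (iota s e).
Proof. by elim: x s e => [|a x IH] s [|e] //=; rewrite addKn -addnS IH. Qed.

Lemma zip_iota_addn x k s e :
  [seq (v.1, v.2 + k) | v <- zip x (iota s e)] = zip x (iota (s + k) e).
Proof. by elim: x s e => [|a x IH] s [|e] //=; rewrite IH addSn. Qed.

Lemma all_zip_iota_ge x s e t : t <= s ->
  all (fun v : T * nat => t <= v.2) (zip x (iota s e)).
Proof.
elim: x s e => [|a x IH] s [|e] //= le_ts.
by rewrite le_ts IH // ltnW // ltnS.
Qed.

End ZipIota.

Lemma mem_zip_iota (T : eqType) (x : seq T) s (a : T) i :
  ((a, i) \in zip x (iota s (size x))) =
  (s <= i < s + size x) && (nth a x (i - s) == a).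
Proof.
elim: x s => [|y x IH] s /=; first by rewrite addn0 ltnNge andbN.
rewrite in_cons IH xpair_eqE; case: (ltngtP i s) => [lt|gt|->].
- by rewrite andbF.
- by rewrite andbF /= addSnnS -(subnSK gt).
- by rewrite andbT subnn /= orbF addnS ltnS leq_addr eq_sym.
Qed.

Lemma zip_iota_inj (T : eqType) (x w : seq T) s :
  size x = size w ->
  {subset zip x (iota s (size x)) <= zip w (iota s (size w))} -> x = w.
Proof.
case: x => [|y x'] sz sub; first by move: sz; case: w sub.
set x := y :: x'; apply: (eq_from_nth (x0 := y)) => // i lt_ix.
have : (nth y x i, s + i) \in zip x (iota s (size x)).
  by rewrite mem_zip_iota leq_addr ltn_add2l lt_ix addKn /= (set_nth_default y).
move/sub; rewrite mem_zip_iota => /andP[_]; rewrite addKn => /eqP <-.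
by apply: set_nth_default; rewrite -sz.
Qed.

Lemma perm_lpmono_inj (T : eqType) (x w : seq T) (m : seq (T * nat)) :
  perm_eq (lpmono x) m -> perm_eq (lpmono w) m -> x = w.
Proof.
move=> xm wm; apply: (@zip_iota_inj _ _ _ 0).
  by rewrite -(size_zip_iota x 0) -(size_zip_iota w 0) (perm_size xm) (perm_size wm).
by move=> z; rewrite (perm_mem xm) -(perm_mem wm).
Qed.

Lemma col_uniq_lpmono (T : eqType) (m : seq (T * nat)) d :
  uniq (map snd m) -> size m = d -> all (fun v : T * nat => v.2 < d) m ->
  exists w : seq T, size w = d /\ perm_eq (lpmono w) m.
Proof.
move=> col_m sz_m cols_m.
set s := sort (fun x y : T * nat => x.2 <= y.2) m.
have perm_s : perm_eq s m by rewrite perm_sort.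
have cols_iota : perm_eq (map snd m) (iota 0 d).
  have sub_cols : {subset map snd m <= iota 0 d}.
    by move=> i /mapP [v vm ->]; rewrite mem_iota /=; exact: (allP cols_m v vm).
  have sz_cols : size (iota 0 d) <= size (map snd m) by rewrite size_iota size_map sz_m.
  have [_ mem_cols] := uniq_min_size col_m sub_cols sz_cols.
  exact: uniq_perm col_m (iota_uniq 0 d) mem_cols.
have snd_s : map snd s = iota 0 d.
  rewrite /s -sort_map (perm_sortP leq_total leq_trans anti_leq _ _ cols_iota).
  by apply: sorted_sort; [exact: leq_trans | exact: iota_sorted].
have sz_s : size s = d by rewrite (perm_size perm_s).
exists (map fst s); rewrite size_map sz_s; split => //.
by rewrite -snd_s (zip_unzip s).
Qed.

Lemma not_uniq_cols (T : eqType) (m : seq (T * nat)) : ~~ uniq (map snd m) ->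
  exists (x y : T * nat) (u : seq (T * nat)), x.2 = y.2 /\ perm_eq m (x :: y :: u).
Proof.
elim: m => [|v r IH] //=; case: (boolP (v.2 \in map snd r)) => [vr _ | vr /= r_col].
  case/mapP: vr => y yr vy; exists v, y, (rem y r); split => //.
  by rewrite perm_cons; apply: perm_to_rem.
have [x [y [u [xy r_xyu]]]] := IH r_col.
exists x, y, (v :: u); split => //.
apply: (@perm_trans _ (v :: x :: y :: u)); first by rewrite perm_cons.
by move: (perm_catCA [:: v] [:: x; y] u (x :: y :: v :: u)) => /= ->.
Qed.

Section Monomials.
Variable n : nat.
Implicit Types (u m v : mono n) (x : var n).

Lemma count_mdiff x m u :
  count_mem x (mdiff m u) = count_mem x m - count_mem x u.
Proof.
elim: u => [|y u IH] /=; first by rewrite subn0.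
rewrite count_mem_rem IH -subnDA addnC.
by congr (_ - (_ + _)); rewrite eq_sym.
Qed.

Lemma mdividesP u m :
  reflect (forall x, count_mem x u <= count_mem x m) (mdivides u m).
Proof.
rewrite /mdivides; apply: (iffP allP) => [le_um x | le_um x _]; last exact: le_um.
case xu: (x \in u); first exact: le_um.
by move: xu; rewrite -has_pred1 has_count; case: (count _ u).
Qed.

Lemma perm_cat_mdiffP v u m :
  reflect (mdivides u m /\ perm_eq v (mdiff m u)) (perm_eq (v ++ u) m).
Proof.
apply: (iffP (perm_countP _ _)) => [cnt | [/mdividesP le_um /perm_countP cnt] x].
  split; [apply/mdividesP => x | apply/perm_countP => x];
    have := cnt x; rewrite count_cat ?count_mdiff => <-.
    by rewrite leq_addl.
  by rewrite addnK.
by rewrite count_cat cnt count_mdiff subnK.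
Qed.

End Monomials.

Section IotaSigma.
Variables (K : fieldType) (n : nat).
Local Open Scope ring_scope.
Implicit Types (f : fpoly K n) (p : ppoly K n) (m : mono n) (w : word n).

Lemma iotaLP_lpmono f w m : perm_eq (lpmono w) m -> iotaLP f m = f w.
Proof.
move=> wm; rewrite /iotaLP.
have sz_m : size m = size w by rewrite -(perm_size wm) size_zip_iota.
have sz_w : size w == size m by rewrite sz_m.
rewrite (big_pred1 (Tuple sz_w)) //= => t /=.
apply/idP/eqP => [tm | ->] /=; last by rewrite sz_m.
by apply: val_inj => /=; apply: (perm_lpmono_inj _ wm); rewrite size_tuple.
Qed.

Lemma iotaLP_neq0 f m : iotaLP f m != 0 ->
  exists w, [/\ size w = size m, perm_eq (lpmono w) m & f w != 0].
Proof.
move=> iota_m; apply/not_all_not_ex => none; move: iota_m.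
rewrite /iotaLP big1 ?eqxx // => t tm; apply/eqP/negPn/negP => ft.
by apply: (none (tval t)); rewrite size_tuple.
Qed.

Lemma iotaLP_supp d f m : homogF d f -> iotaLP f m != 0 ->
  size m = d /\ all (fun v : var n => v.2 < d)%N m.
Proof.
move=> hom_f /iotaLP_neq0 [w [sz_w wm fw]]; have sz_d := hom_f _ fw.
split; first by rewrite -sz_w.
rewrite -(perm_all _ wm); apply/allP => -[a i]; rewrite mem_zip_iota sz_d.
by case/andP => /andP[_ lt_id] _.
Qed.

Lemma iter_sigmaE k p m :
  iter k (@sigma K n) p m =
  if all (fun v : var n => k <= v.2)%N m
  then p [seq (v.1, v.2 - k)%N | v <- m] else 0.
Proof.
elim: k m => [|k IH] m /=.
  rewrite (eq_all (a2 := predT)) ?all_predT //.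
  by congr p; rewrite map_id_in // => -[a b] _ /=; rewrite subn0.
rewrite {1}/sigma IH all_map -map_comp.
case: (boolP (all _ m)) => m_ge.
  have -> : all (preim (fun v : var n => (v.1, v.2.-1))
                       (fun v : var n => k <= v.2)%N) m
          = all (fun v : var n => k < v.2)%N m.
    by apply: eq_in_all => v vm /=; move/allP: m_ge => /(_ v vm) /=; lia.
  by case: ifP => // _; congr p; apply: eq_map => v /=; congr pair; lia.
case: ifP => // m_gt; case/negP: m_ge.
by apply/allP => v vm; move/allP: m_gt => /(_ v vm) /=; lia.
Qed.

End IotaSigma.

Section QuotientQ.
Variables (K : fieldType) (n : nat).
Local Open Scope ring_scope.
Implicit Types (f : fpoly K n) (p q r : ppoly K n) (m u : mono n) (w : word n).

Lemma is_poly_perm p m1 m2 : is_poly p -> perm_eq m1 m2 -> p m1 = p m2.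
Proof. by move=> [s E] m12; rewrite !E; apply: eq_bigl => t; exact: (permPr m12). Qed.

Lemma is_poly_sub p q : is_poly p -> is_poly q -> is_poly (fun m => p m - q m).
Proof.
move=> [s1 E1] [s2 E2]; exists (s1 ++ [seq (- t.1, t.2) | t <- s2]) => m.
by rewrite big_cat big_map /= sumrN E1 E2.
Qed.

Lemma is_poly_iotaLP f : is_F f -> is_poly (iotaLP f).
Proof.
move=> [s supp_f]; exists [seq (f w, lpmono w) | w <- undup s] => m.
rewrite big_map /=.
case: (classic (exists x : word n, perm_eq (lpmono x) m)) => [[x xm] | no_x].
  rewrite (iotaLP_lpmono f xm) (eq_bigl (fun w => w == x)); last first.
    by move=> w /=; apply/idP/eqP => [wm | -> //]; apply: perm_lpmono_inj wm xm.
  rewrite -big_filter; case: (boolP (x \in s)) => xs.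
    by rewrite filter_pred1_uniq ?undup_uniq ?mem_undup // big_seq1.
  rewrite big1_seq ?supp_f // => w /andP[_].
  by rewrite mem_filter => /andP[/eqP -> _]; exact: supp_f.
rewrite big1_seq => [|w /andP[wm _]]; last by case: no_x; exists w.
by apply/eqP/negPn/negP => /iotaLP_neq0 [x [_ xm _]]; apply: no_x; exists x.
Qed.

Lemma genP_add (S : ppoly K n -> Prop) p q :
  genP S p -> genP S q -> genP S (fun m => p m + q m).
Proof.
move=> [l1 [S1 E1]] [l2 [S2 E2]]; exists (l1 ++ l2); split; first exact: all_in_cat.
by move=> m; rewrite big_cat /= E1 E2.
Qed.

Lemma genP_ext (S : ppoly K n -> Prop) p q :
  (forall m, p m = q m) -> genP S p -> genP S q.
Proof. by move=> pq [l [Sl El]]; exists l; split => // m; rewrite -pq. Qed.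

Lemma mono_poly_mulmono m0 u (x y : var n) : perm_eq m0 (x :: y :: u) ->
  mulmono u (mono_poly K [:: x; y]) =1 mono_poly K m0.
Proof.
move=> m0_xyu m; rewrite /mono_poly /mulmono ((permPl m0_xyu) m).
case: (boolP (perm_eq (x :: y :: u) m)) => [/(perm_cat_mdiffP [:: x; y])[-> ->] // | not_m].
case: ifP => // div; case: ifP => // xy; case/negP: not_m.
exact/(perm_cat_mdiffP [:: x; y]).
Qed.

Lemma Qgen_col (x y : var n) : x.2 = y.2 -> Qgen (mono_poly K [:: x; y]).
Proof. by case: x y => i j [k j'] /= ->; exists i, k, j'. Qed.

Lemma Qideal_col_uniq q m : Qideal q -> uniq (map snd m) -> q m = 0.
Proof.
move=> [l [Ql E]] col_m; rewrite E; elim: l Ql {E} => [|t l IH] /=.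
  by rewrite big_nil.
move=> [[i [k [j t_ikj]]] Ql]; rewrite big_cons IH // addr0 t_ikj /mulmono /mono_poly.
case: ifP => [div|]; last by rewrite mulr0.
case: ifP => [ij_u|]; last by rewrite mulr0.
have : perm_eq ([:: (i, j); (k, j)] ++ t.1.2) m by apply/perm_cat_mdiffP.
by move/(perm_map snd)/perm_uniq; rewrite col_m /= inE eqxx.
Qed.

Lemma Qideal_of_col_uniq q :
  is_poly q -> (forall m, uniq (map snd m) -> q m = 0) -> Qideal q.
Proof.
move=> [s E] q_col.
set sb := filter (fun t : K * mono n => ~~ uniq (map snd t.2)) s.
have E_sb m : q m = \sum_(t <- sb | perm_eq t.2 m) t.1.
  rewrite big_filter_cond; case: (boolP (uniq (map snd m))) => col_m.
    rewrite q_col // big1 // => t /andP[col_t tm]; move: col_t.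
    by rewrite (perm_uniq (perm_map snd tm)) col_m.
  rewrite E; apply: eq_bigl => t; case: (boolP (perm_eq t.2 m)) => tm; last by rewrite andbF.
  by rewrite (perm_uniq (perm_map snd tm)) col_m.
have sb_col : all (fun t : K * mono n => ~~ uniq (map snd t.2)) sb.
  exact: filter_all.
rewrite /Qideal; apply: (genP_ext (fun m => esym (E_sb m))).
elim: sb sb_col {E_sb} => [_ | t r IH /andP[t_col /IH]] /=.
  by exists [::]; split => // m; rewrite !big_nil.
move=> [l [Ql El]]; have [x [y [u [xy t_xyu]]]] := not_uniq_cols t_col.
exists ((t.1, u, mono_poly K [:: x; y]) :: l); split; first by split => //; exact: Qgen_col.
move=> m; rewrite !big_cons El /= (mono_poly_mulmono t_xyu) /mono_poly.
by case: ifP; rewrite ?mulr1 ?mulr0 ?add0r.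
Qed.

Lemma eqQ_trans p q r : eqQ p q -> eqQ q r -> eqQ p r.
Proof. by move=> pq qr; apply: genP_ext (genP_add pq qr) => m; rewrite addrA subrK. Qed.

Lemma eqQ_lpmono p q w : eqQ p q -> p (lpmono w) = q (lpmono w).
Proof.
move=> /Qideal_col_uniq pq; apply/eqP; rewrite -subr_eq0; apply/eqP.
exact: pq (uniq_cols_zip_iota _ _).
Qed.

Lemma eqQ_inPdd d p q : inPdd d p -> inPdd d q ->
  (forall w, size w = d -> p (lpmono w) = q (lpmono w)) -> eqQ p q.
Proof.
move=> [Pp supp_p] [Pq supp_q] pq; apply: Qideal_of_col_uniq => [|m col_m].
  exact: is_poly_sub.
case: (boolP ((size m == d) && all (fun v : var n => v.2 < d)%N m)).
  case/andP => /eqP sz_m cols_m.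
  have [w [sz_w wm]] := col_uniq_lpmono col_m sz_m cols_m.
  by rewrite -(is_poly_perm Pp wm) -(is_poly_perm Pq wm) pq ?subrr.
move=> out_m; have vanish r : (forall m, r m != 0 ->
    size m = d /\ all (fun v : var n => v.2 < d)%N m) -> r m = 0.
  by move=> supp_r; apply: contraNeq out_m => /supp_r[-> ->]; rewrite eqxx.
by rewrite (vanish p) ?(vanish q) ?subrr.
Qed.

Lemma iotaLP_inPdd d f : is_F f -> homogF d f -> inPdd d (iotaLP f).
Proof. by move=> F_f hom_f; split; [exact: is_poly_iotaLP | move=> m /(iotaLP_supp hom_f)]. Qed.

Lemma iotaLP_eqQ_inj f g : eqQ (iotaLP f) (iotaLP g) -> f =1 g.
Proof.
move=> fg w; rewrite -(iotaLP_lpmono f (perm_refl _)) -(iotaLP_lpmono g (perm_refl _)).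
exact: eqQ_lpmono.
Qed.

End QuotientQ.

Section LetterplaceCoefficient.
Variables (K : fieldType) (n : nat).
Local Open Scope ring_scope.
Implicit Types (f : fpoly K n) (u : mono n) (w : word n).

Definition lp_outer w k e : mono n :=
  zip (take k w) (iota 0 k) ++ zip (drop (k + e) w) (iota (k + e) (size w - (k + e))).

Lemma lpcoef_neq0 u k f w : lpcoef u k f w != 0 ->
  exists w' : word n, [/\ size w' = (size w - size u)%N, (size u <= size w)%N &
     perm_eq (lpmono w) (zip w' (iota k (size w')) ++ u)].
Proof.
set m := lpmono w; rewrite /mulmono; case: ifP => [div|]; last by rewrite eqxx.
set M := mdiff m u.
have Mu_m : perm_eq (M ++ u) m by apply/perm_cat_mdiffP.
rewrite iter_sigmaE; case: ifP => [M_ge|]; last by rewrite eqxx.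
case/iotaLP_neq0 => w' [sz_w' w'M _].
have sz_m : size m = (size M + size u)%N by rewrite -(perm_size Mu_m) size_cat.
have sz_w : size m = size w by rewrite /m size_zip_iota.
have sz_M : size w' = size M by rewrite sz_w' size_map.
exists w'; split; [lia | lia |].
have M_shift : M = [seq (v.1, v.2 + k)%N | v <- [seq (v.1, v.2 - k)%N | v <- M]].
  rewrite -map_comp map_id_in // => -[a i] /= aM; congr pair.
  by move/allP: M_ge => /(_ _ aM) /=; lia.
rewrite perm_sym in w'M.
have := perm_map (fun v : var n => (v.1, v.2 + k)%N) w'M.
rewrite zip_iota_addn add0n -M_shift => M_w'.
by rewrite perm_sym in Mu_m; apply: (perm_trans Mu_m); rewrite perm_cat2r.
Qed.

Lemma lpmono_perm_shift_cat w (w' : word n) u k :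
  perm_eq (lpmono w) (zip w' (iota k (size w')) ++ u) ->
  ((0 < size w') -> k + size w' <= size w)%N /\
  ((k + size w' <= size w)%N ->
     w' = take (size w') (drop k w) /\ perm_eq u (lp_outer w k (size w'))).
Proof.
move=> w_w'u; split.
  case: w' w_w'u => [|y w'] w_w'u //= _.
  have y_last : (nth y (y :: w') (size w'), (k + size w')%N)
                \in zip (y :: w') (iota k (size (y :: w'))).
    by rewrite mem_zip_iota /= leq_addr addnS ltnS leqnn addKn /= (set_nth_default y).
  have : (nth y (y :: w') (size w'), (k + size w')%N) \in lpmono w.
    by rewrite (perm_mem w_w'u) mem_cat y_last.
  by rewrite mem_zip_iota => /andP[/andP[_]]; rewrite add0n addnS.
move=> le_kw'w.
have sz_mid : size (take (size w') (drop k w)) = size w'.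
  by rewrite size_takel // size_drop leq_subRL // (leq_trans (leq_addr _ _) le_kw'w).
have w'_mid : w' = take (size w') (drop k w).
  apply: (@zip_iota_inj _ _ _ k); first by rewrite sz_mid.
  move=> [a i] ai_w'.
  have ai_w : (a, i) \in lpmono w by rewrite (perm_mem w_w'u) mem_cat ai_w'.
  move: ai_w' ai_w; rewrite !mem_zip_iota sz_mid.
  move=> /andP[/andP[le_ki lt_iw'] _] /andP[/andP[_ lt_iw] /eqP wi].
  have lt_ikw' : ((i : nat) - k < size w')%N by rewrite ltn_subLR.
  rewrite le_ki lt_iw' /= nth_take //.
  by rewrite nth_drop subnKC // -{2}wi subn0.
split => //; move: w_w'u.
by rewrite (zip_iota_cat3 le_kw'w) -w'_mid perm_catCA perm_cat2l perm_sym.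
Qed.

Lemma lpcoef_outer u k f w e : (k + e <= size w)%N ->
  perm_eq u (lp_outer w k e) -> lpcoef u k f w = f (take e (drop k w)).
Proof.
move=> le_kew u_out; set mid := take e (drop k w).
have sz_mid : size mid = e by rewrite size_takel // size_drop; lia.
have : perm_eq (zip mid (iota k e) ++ u) (lpmono w).
  by rewrite (zip_iota_cat3 le_kew) perm_sym perm_catCA perm_cat2l perm_sym.
case/perm_cat_mdiffP => div mid_diff; rewrite /mulmono div iter_sigmaE.
rewrite -(perm_all _ mid_diff) all_zip_iota_ge //.
apply: iotaLP_lpmono; rewrite sz_mid -(zip_iota_subn mid k 0 e) addn0 perm_sym.
by apply: perm_map; rewrite perm_sym.
Qed.

Lemma lpcoefE u k f w : (k <= size u)%N -> (size u <= size w)%N ->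
  lpcoef u k f w =
  if perm_eq u (lp_outer w k (size w - size u))
  then f (take (size w - size u) (drop k w)) else 0.
Proof.
move=> le_ku le_uw; case: ifP => u_out; first by apply: lpcoef_outer => //; lia.
apply/eqP/negPn/negP => /lpcoef_neq0 [w' [sz_w' _ w_w'u]].
have le_kw'w : (k + size w' <= size w)%N by lia.
have [_ /(_ le_kw'w)[_]] := lpmono_perm_shift_cat w_w'u.
by rewrite sz_w' u_out.
Qed.

Lemma lpcoef_size_gt u k f w : (size w < size u)%N -> lpcoef u k f w = 0.
Proof. by move=> lt_wu; apply/eqP/negPn/negP => /lpcoef_neq0 [w' [_ le_uw _]]; lia. Qed.

Lemma lpcoef_shift_gt u k f w : (size u < size w)%N -> (size u < k)%N ->
  lpcoef u k f w = 0.
Proof.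
move=> lt_uw lt_uk; apply/eqP/negPn/negP => /lpcoef_neq0 [w' [sz_w' _ w_w'u]].
have pos_w' : (0 < size w')%N by lia.
by have [/(_ pos_w') le_kw _] := lpmono_perm_shift_cat w_w'u; lia.
Qed.

(* If u has full degree, the cofactor of u is the constant monomial, which
   every shift sigma^k fixes. *)
Lemma lpcoef_shift_full u k k' f w : size u = size w ->
  lpcoef u k f w = lpcoef u k' f w.
Proof.
move=> sz_uw; rewrite /mulmono; case: ifP => // div.
have : perm_eq (mdiff (lpmono w) u ++ u) (lpmono w) by apply/perm_cat_mdiffP.
move/perm_size; rewrite size_cat size_zip_iota sz_uw.
by case: (mdiff _ _) => [|a l] /=; [rewrite !iter_sigmaE | lia].
Qed.

End LetterplaceCoefficient.

Lemma sum_ord_single (R : nmodType) (F : nat -> R) N i0 :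
  (forall i, i < N -> i != i0 -> F i = 0%R) ->
  (\sum_(i < N) F i)%R = if i0 < N then F i0 else 0%R.
Proof.
move=> F_single; case: ifP => lt_i0N.
  rewrite (bigD1 (Ordinal lt_i0N)) //= big1 ?addr0 // => i ne_i.
  apply: F_single; first exact: ltn_ord.
  by apply: contra ne_i => /eqP eq_i; apply/eqP; apply: val_inj.
apply: big1 => i _; apply: F_single => //.
by apply/eqP => eq_i; rewrite -eq_i ltn_ord in lt_i0N.
Qed.

Section Sandwich.
Variables (K : fieldType) (n : nat).
Local Open Scope ring_scope.
Implicit Types (f g : fpoly K n) (a b x : word n) (c : K).

Definition fmono c a : fpoly K n := fun x => if x == a then c else 0.

Lemma is_F_fmono c a : is_F (fmono c a).
Proof. by exists [:: a] => w; rewrite inE /fmono => /negbTE ->. Qed.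

Lemma fmul_fmonol c a f x :
  fmul (fmono c a) f x =
  if take (size a) x == a then c * f (drop (size a) x) else 0.
Proof.
rewrite /fmul (@sum_ord_single _ (fun i => fmono c a (take i x) * f (drop i x)) _ (size a)).
  case: ifP => le_ax; first by rewrite /fmono; case: eqP => _; rewrite ?mul0r.
  have lt_xa : (size x < size a)%N by rewrite ltnNge -ltnS le_ax.
  rewrite take_oversize; last exact: ltnW.
  by have -> : (x == a) = false by apply/negbTE/eqP => xa; rewrite xa ltnn in lt_xa.
move=> i lt_i ne_i; rewrite /fmono; case: eqP => [xi_a|]; last by rewrite mul0r.
by move: ne_i; rewrite -xi_a size_takel ?eqxx // -ltnS.
Qed.

Lemma fmul_fmonor c b f x :
  fmul f (fmono c b) x =
  if drop (size x - size b)%N x == b then f (take (size x - size b)%N x) * c else 0.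
Proof.
rewrite /fmul (@sum_ord_single _ (fun i => f (take i x) * fmono c b (drop i x)) _
  (size x - size b)%N).
  by rewrite ltnS leq_subr /fmono; case: eqP => _; rewrite ?mulr0.
move=> i lt_i ne_i; rewrite /fmono; case: eqP => [xi_b|]; last by rewrite mulr0.
by move: ne_i; rewrite -xi_b size_drop; rewrite ltnS in lt_i; rewrite subKn // eqxx.
Qed.

Lemma homogF_fhom d f : homogF d (fhom d f).
Proof. by move=> x; rewrite /fhom; case: ifP => [/eqP // | _]; rewrite eqxx. Qed.

Variable I : fpoly K n -> Prop.
Hypothesis HI : graded_ideal I.

Lemma ideal0 : I (fun _ => 0).
Proof. by case: HI. Qed.

Lemma idealD f g : I f -> I g -> I (fun x => f x + g x).
Proof. by case: HI => _ _ addI _ _; apply: addI. Qed.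

Lemma ideal_sum (T : Type) (r : seq T) (F : T -> fpoly K n) :
  (forall t, I (F t)) -> I (fun x => \sum_(t <- r) F t x).
Proof.
move=> IF; elim: r => [|t r IH].
  have -> : (fun x : word n => \sum_(t <- [::]) F t x) = (fun _ => 0).
    by apply: functional_extensionality => x; rewrite big_nil.
  exact: ideal0.
have -> : (fun x : word n => \sum_(t0 <- t :: r) F t0 x) =
          (fun x => F t x + \sum_(t0 <- r) F t0 x).
  by apply: functional_extensionality => x; rewrite big_cons.
exact: idealD.
Qed.

Definition outer_coef (u : mono n) c k e j (a : k.-tuple 'I_n) (b : j.-tuple 'I_n) : K :=
  if perm_eq u (zip a (iota 0 k) ++ zip b (iota (k + e) j)) then c else 0.

(* Evaluated at a word of length k + e + j, this matches the letterplace
   coefficient of u sigma^k(iota f) computed in lpcoefE. *)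
Definition sandwich (u : mono n) c f k e j : fpoly K n :=
  fun x => \sum_(a : k.-tuple 'I_n) \sum_(b : j.-tuple 'I_n)
      fmul (fmul (fmono (outer_coef u c e a b) a) f) (fmono 1 b) x.

Lemma ideal_sandwich u c f k e j : I f -> I (sandwich u c f k e j).
Proof.
move=> If; apply: ideal_sum => a; apply: ideal_sum => b.
case: HI => _ _ _ mulI _.
have [af _] := mulI _ _ (is_F_fmono (outer_coef u c e a b) a) If.
by have [_ afb] := mulI _ _ (is_F_fmono 1 b) af.
Qed.

Lemma sandwichE u c f k e j x : size x = (k + e + j)%N ->
  sandwich u c f k e j x =
  (if perm_eq u (zip (take k x) (iota 0 k) ++ zip (drop (k + e) x) (iota (k + e) j))
   then c else 0) * f (take e (drop k x)).
Proof.
move=> sz_x.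
have sz_b : size (drop (k + e) x) == j by rewrite size_drop sz_x addKn.
have sz_a : size (take k x) == k by rewrite size_takel // sz_x -addnA leq_addr.
have sz_xj : (size x - j = k + e)%N by rewrite sz_x addnK.
have take_a : take k (take (k + e) x) = take k x by rewrite take_takel // leq_addr.
have drop_a : drop k (take (k + e) x) = take e (drop k x) by rewrite take_drop addnC.
have inner (a : k.-tuple 'I_n) :
   \sum_(b : j.-tuple 'I_n) fmul (fmul (fmono (outer_coef u c e a b) a) f) (fmono 1 b) x =
   if take k x == a then outer_coef u c e a (Tuple sz_b) * f (take e (drop k x)) else 0.
  rewrite (bigD1 (Tuple sz_b)) //= big1 ?addr0.
    by rewrite fmul_fmonor (eqP sz_b) sz_xj eqxx mulr1 fmul_fmonol size_tuple take_a drop_a.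
  move=> b ne_b; rewrite fmul_fmonor size_tuple sz_xj.
  by case: eqP => // eq_b; case/negP: ne_b; apply/eqP/val_inj; rewrite /= eq_b.
rewrite /sandwich (eq_bigr _ (fun (a : k.-tuple _) _ => inner a)) (bigD1 (Tuple sz_a)) //= eqxx.
rewrite big1 ?addr0 // => a ne_a; case: eqP => // eq_a.
by case/negP: ne_a; apply/eqP/val_inj; rewrite /= eq_a.
Qed.

End Sandwich.

Section LetterplaceIdeal.
Variables (K : fieldType) (n : nat) (I : fpoly K n -> Prop).
Hypothesis HI : graded_ideal I.
Variable d : nat.
Local Open Scope ring_scope.
Implicit Types (f : fpoly K n) (g p r : ppoly K n) (u : mono n) (w : word n).

Lemma lpcoef_in_ideal u c k f : I f -> (k <= size u)%N -> (size u <= d)%N ->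
  exists h, I h /\ forall w, size w = d -> h w = c * lpcoef u k f w.
Proof.
move=> If le_ku le_ud; exists (sandwich u c f k (d - size u) (size u - k)); split.
  exact: ideal_sandwich.
move=> w sz_w; rewrite sandwichE; last by rewrite sz_w; lia.
rewrite -sz_w lpcoefE /lp_outer //; last by rewrite sz_w.
have -> : (size w - (k + (size w - size u)) = size u - k)%N by rewrite sz_w; lia.
by case: ifP => _; rewrite ?mulr0 ?mul0r.
Qed.

Lemma generator_coef_in_ideal g u c :
  (Qgen g \/ exists k f, I f /\ g = iter k (@sigma K n) (iotaLP f)) ->
  exists h, I h /\ forall w, size w = d -> h w = c * mulmono u g (lpmono w).
Proof.
case=> [Qg | [k [f [If ->]]]].
  exists (fun _ => 0); split => [|w _]; first exact: ideal0.
  rewrite (Qideal_col_uniq (q := mulmono u g)) ?mulr0 //; last exact: uniq_cols_zip_iota.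
  by exists [:: (1, u, g)]; split => //= m; rewrite big_seq1 mul1r.
have [lt_du | le_ud] := ltnP d (size u).
  exists (fun _ => 0); split => [|w sz_w]; first exact: ideal0.
  by rewrite lpcoef_size_gt ?mulr0 // sz_w.
have [le_ku | lt_uk] := leqP k (size u); first exact: lpcoef_in_ideal.
have [eq_ud | ne_ud] := eqVneq (size u) d.
  have [h [Ih Eh]] := lpcoef_in_ideal c If (leqnn (size u)) le_ud.
  exists h; split => // w sz_w.
  by rewrite Eh // (lpcoef_shift_full (size u) k f) // sz_w.
have lt_ud : (size u < d)%N by rewrite ltn_neqAle ne_ud le_ud.
exists (fun _ => 0); split => [|w sz_w]; first exact: ideal0.
by rewrite lpcoef_shift_gt ?mulr0 // sz_w.
Qed.

Lemma LIpre_coef_in_ideal r : LIpre I r ->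
  exists f, I f /\ forall w, size w = d -> f w = r (lpmono w).
Proof.
move=> [l [gen_l E]].
suff [f [If Ef]] : exists f, I f /\ forall w, size w = d ->
    f w = \sum_(t <- l) t.1.1 * mulmono t.1.2 t.2 (lpmono w).
  by exists f; split => // w sz_w; rewrite E Ef.
elim: l gen_l {E} => [_ | t l IH [gen_t /IH[f [If Ef]]]] /=.
  by exists (fun _ => 0); split => [|w _]; [exact: ideal0 | rewrite big_nil].
have [h [Ih Eh]] := generator_coef_in_ideal t.1.2 t.1.1 gen_t.
exists (fun w => h w + f w); split; first exact: idealD.
by move=> w sz_w; rewrite big_cons Eh // Ef.
Qed.

Lemma LIpre_inPdd_eqQ_iotaLP r p : LIpre I r -> inPdd d p -> eqQ r p ->
  exists f, I f /\ homogF d f /\ eqQ r (iotaLP f).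
Proof.
move=> /LIpre_coef_in_ideal[f [If f_r]] Pdd_p rp.
have F_fd : is_F (fhom d f) by case: HI => F_I _ _ _ graded; apply/F_I/graded.
exists (fhom d f); split; first by case: HI => _ _ _ _; apply.
split; first exact: homogF_fhom.
apply: (eqQ_trans rp); apply: eqQ_inPdd Pdd_p (iotaLP_inPdd F_fd (@homogF_fhom K n d f)) _.
move=> w sz_w; rewrite -(eqQ_lpmono w rp) -f_r //.
by rewrite (iotaLP_lpmono _ (perm_refl _)) /fhom sz_w eqxx.
Qed.

Lemma eqQ_iotaLP_LIpre r f : I f -> eqQ r (iotaLP f) -> LIpre I r.
Proof.
move=> If [l [Ql El]]; exists (l ++ [:: (1, [::], iotaLP f)]); split.
  apply: all_in_cat; first by apply: all_in_impl Ql => t Qt; left.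
  by split => //; right; exists 0%N, f.
by move=> m; rewrite big_cat big_seq1 /= -El mul1r /mulmono /= subrK.
Qed.

End LetterplaceIdeal.

Theorem mainTheorem5 (K : fieldType) (n : nat) (I : fpoly K n -> Prop)
  (HI : graded_ideal I) (d : nat) :
  (forall r : ppoly K n, is_poly r ->
     ((LIpre I r /\ exists p, inPdd d p /\ eqQ r p) <->
      exists f, I f /\ homogF d f /\ eqQ r (iotaLP f)))
  /\
  (forall f g : fpoly K n, I f -> I g -> homogF d f -> homogF d g ->
     eqQ (iotaLP f) (iotaLP g) -> forall w, f w = g w).
Proof.
have F_I f : I f -> is_F f by case: HI => F_I _ _ _ _; apply: F_I.
split=> [r _ | f g _ _ _ _]; last exact: iotaLP_eqQ_inj.
split=> [[Jr [p [Pdd_p rp]]] | [f [If [hom_f rf]]]].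
  exact: (LIpre_inPdd_eqQ_iotaLP HI Jr Pdd_p rp).
split; first exact: eqQ_iotaLP_LIpre If rf.
by exists (iotaLP f); split => //; apply: iotaLP_inPdd (F_I f If) hom_f.
Qed.
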